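(* Let $G$ and $H$ be nontrivial finite groups. The cyclic graph $\Delta(G\times H)$ is disconnected if and only if there is a prime $p$ and an element $x\in G\times H$ of order $p$ whose centralizer $C_{G\times H}(x)$ is a $p$-group.
   Context: For a finite group $X$, the cyclic graph $\Delta(X)$ has vertex set $X^{\#}=X\setminus\{1\}$, and distinct vertices $x,y$ are adjacent if and only if the subgroup $\langle x,y\rangle$ is cyclic. *)

From mathcomp Require Import all_boot all_fingroup all_solvable.
Set Implicit Arguments. Unset Strict Implicit. Unset Printing Implicit Defensive.
Local Open Scope group_scope.

Definition cyc_adj (gT : finGroupType) : rel gT :=
  fun x y => [&& x != 1, y != 1, x != y & cyclic <<[set x; y]>>].

Definition cyclic_graph_connected (gT : finGroupType) : Prop :=
  forall x y : gT, x != 1 -> y != 1 -> connect (@cyc_adj gT) x y.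

From mathcomp Require Import all_boot all_fingroup all_solvable.
Set Implicit Arguments. Unset Strict Implicit. Unset Printing Implicit Defensive.
Local Open Scope group_scope.

(* Let x have prime order p with C(x) a p-group. If x lies in <u> and v is
   adjacent to u, then v centralises x, so v is a nontrivial p-element and,
   inside the cyclic group <u, v>, <x> <= <v>. Hence every vertex connected to
   x generates a cyclic group containing x, and a nontrivial element of the
   factor of G x H in which x has trivial coordinate is not connected to x.
   Conversely, if no such x exists, every w = (a, b) of prime order p commutes
   with a nontrivial p'-element, one of whose coordinates c (say) is nontrivial
   and gives an element (c, 1) commuting with w, of order coprime to p.
   Commuting elements of coprime orders are connected through their product,
   so every vertex is connected to G x 1 or 1 x H; two prime-order elements
   (g, 1), (1, h) are adjacent if their orders differ, and are connected via
   the witness for (g, h) if they are equal. *)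

Section CyclicGraph.

Variable gT : finGroupType.
Implicit Types x y z u v w : gT.
Local Notation adj := (@cyc_adj gT).

Lemma cyc_adj_sym : symmetric adj.
Proof.
move=> x y; rewrite /cyc_adj [y == x]eq_sym [[set y; x]]setUC.
by case: (x != 1); case: (y != 1).
Qed.

Lemma connect_cyc_adj_sym : connect_sym adj.
Proof. exact: sym_connect_sym cyc_adj_sym. Qed.

Lemma cyc_adj_commute u v : adj u v -> commute u v.
Proof.
case/and4P=> _ _ _ /cyclic_abelian/centsP cUV.
by apply: cUV; apply: mem_gen; rewrite !inE eqxx ?orbT.
Qed.

Lemma connect_in_cycle w x y :
  x != 1 -> y != 1 -> x \in <[w]> -> y \in <[w]> -> connect adj x y.
Proof.
move=> nx ny xw yw; have [-> // | nxy] := eqVneq x y.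
apply: connect1; rewrite /cyc_adj nx ny nxy /=.
apply: cyclicS (cycle_cyclic w); rewrite gen_subG.
by apply/subsetP => u; rewrite !inE => /orP[] /eqP ->.
Qed.

Lemma connect_commute_coprime x y :
  x != 1 -> y != 1 -> commute x y -> coprime #[x] #[y] -> connect adj x y.
Proof.
move=> nx ny cxy co_xy; apply: (connect_in_cycle (w := x * y)) => //.
  exact: subsetP (cycleMsub cxy co_xy) x (cycle_id x).
rewrite coprime_sym in co_xy; rewrite cxy.
exact: subsetP (cycleMsub (commute_sym cxy) co_xy) y (cycle_id y).
Qed.

Lemma cycle_prime_order_elt y :
  y != 1 -> exists2 z, z \in <[y]> & prime #[z].
Proof.
rewrite -order_gt1 => y_gt1; have p_pr := pdiv_prime y_gt1.
have [z zy oz] := Cauchy p_pr (pdiv_dvd #[y]).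
by exists z; rewrite ?oz.
Qed.

Lemma not_pgroup_p'_elt (pi : nat_pred) (K : {group gT}) :
  ~~ pi.-group K -> exists2 z, z \in K & (z != 1) && pi^'.-elt z.
Proof.
rewrite /pgroup /pnat cardG_gt0 -has_predC => /hasP[q].
rewrite mem_primes => /and3P[q_pr _ qK] q_pi'.
have [z zK oz] := Cauchy q_pr qK.
exists z; rewrite // -order_gt1 oz prime_gt1 //=.
by rewrite /p_elt oz pnatE.
Qed.

Lemma mem_cycle_cyc_adj p x u v :
  #[x] = p -> p.-group 'C[x] -> adj u v -> x \in <[u]> -> x \in <[v]>.
Proof.
move=> ox pC adj_uv /cycleP[i def_x]; rewrite {x}def_x in ox pC *.
have /and4P[_ nv _ cycK] := adj_uv.
have cvx : v \in 'C[u ^+ i].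
  by apply/cent1P/commuteX/commute_sym/cyc_adj_commute.
have p_dv_v : p %| #[v] by rewrite -(pdiv_p_elt (mem_p_elt pC cvx) nv) pdiv_dvd.
have uK : u \in <<[set u; v]>> by apply: mem_gen; rewrite !inE eqxx.
have vK : v \in <<[set u; v]>> by apply: mem_gen; rewrite !inE eqxx orbT.
by rewrite -cycle_subG -(cardSg_cyclic cycK) ?cycle_subG ?groupX // -!orderE ox.
Qed.

Lemma connect_mem_cycle p x y :
  #[x] = p -> p.-group 'C[x] -> connect adj x y -> x \in <[y]>.
Proof.
move=> ox pC; have cl_x : closed adj [pred u | x \in <[u]>].
  apply: (intro_closed connect_cyc_adj_sym) => u v; exact: mem_cycle_cyc_adj ox pC.
by move/(closed_connect cl_x); rewrite !inE /= cycle_id => <-.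
Qed.

Lemma cent1_pgroup_not_connected p x y :
  x != 1 -> #[x] = p -> p.-group 'C[x] -> y != 1 -> x \notin <[y]> ->
  ~ cyclic_graph_connected gT.
Proof.
by move=> nx ox pC ny /negP x'y conn; apply/x'y/(connect_mem_cycle ox pC)/conn.
Qed.

Lemma nontrivial_elt : 1 < #|gT| -> exists x : gT, x != 1.
Proof. by rewrite -cardsT cardG_gt1 => /trivgPn[x _ nx]; exists x. Qed.

End CyclicGraph.

Section DirectProduct.

Variables G H : finGroupType.
Implicit Types (a c g : G) (b d h : H).
(* The cast selects the finGroupType structure of G * H; without it the pairs
   below get the monoid structure on pairs and the lemmas no longer match. *)
Local Notation GH := ((G * H)%type : finGroupType).
Local Notation adj := (@cyc_adj GH).

Lemma pairg1_eq1 c : ((c, 1) == 1 :> GH) = (c == 1).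
Proof. by rewrite -(morph_injm_eq1 (injm_pairg1 G H) (in_setT c)). Qed.

Lemma pair1g_eq1 d : ((1, d) == 1 :> GH) = (d == 1).
Proof. by rewrite -(morph_injm_eq1 (injm_pair1g G H) (in_setT d)). Qed.

Lemma order_pairg1 c : #[(c, 1) : GH] = #[c].
Proof. by rewrite -(order_injm (injm_pairg1 G H) (in_setT c)). Qed.

Lemma order_pair1g d : #[(1, d) : GH] = #[d].
Proof. by rewrite -(order_injm (injm_pair1g G H) (in_setT d)). Qed.

Lemma cycle_pairg1 c : <[(c, 1) : GH]> = setX <[c]> 1.
Proof. by rewrite -morphim_pairg1 (morphim_cycle (pairg1_morphism G H)) ?inE. Qed.

Lemma cycle_pair1g d : <[(1, d) : GH]> = setX 1 <[d]>.
Proof. by rewrite -morphim_pair1g (morphim_cycle (pair1g_morphism G H)) ?inE. Qed.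

Lemma expg_pair a b n : (a, b) ^+ n = (a ^+ n, b ^+ n).
Proof. by elim: n => [|n IHn]; rewrite ?expg0 // !expgS IHn. Qed.

Lemma order_pair_eq g h : #[g] = #[h] -> #[(g, h)] = #[g].
Proof.
move=> ogh; have /= g_dv_gh := morph_order (fst_morphism G H) (in_setT (g, h)).
apply/eqP; rewrite eqn_dvd g_dv_gh order_dvdn expg_pair {2}ogh !expg_order.
by rewrite andbT; apply/eqP.
Qed.

Lemma commute_pair a b c d :
  commute ((a, b) : GH) (c, d) <-> commute a c /\ commute b d.
Proof. by split=> [[] | [cac cbd]] //; rewrite /commute /=; congr (_, _). Qed.

Lemma connect_pairg1_coprime a b c :
  (a, b) != 1 -> c != 1 -> commute a c -> coprime #[(a, b)] #[c] ->
  connect adj (a, b) (c, 1).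
Proof.
move=> nab nc cac co; apply: connect_commute_coprime; rewrite ?order_pairg1 //.
  by rewrite pairg1_eq1.
by apply/commute_pair; split; last exact: commute1.
Qed.

Lemma connect_pair1g_coprime a b d :
  (a, b) != 1 -> d != 1 -> commute b d -> coprime #[(a, b)] #[d] ->
  connect adj (a, b) (1, d).
Proof.
move=> nab nd cbd co; apply: connect_commute_coprime; rewrite ?order_pair1g //.
  by rewrite pair1g_eq1.
by apply/commute_pair; split; first exact: commute1.
Qed.

Lemma exists_not_mem_cycle (x : GH) :
  1 < #|G| -> 1 < #|H| -> x != 1 -> exists2 y : GH, y != 1 & x \notin <[y]>.
Proof.
case: x => a b /nontrivial_elt[c nc] /nontrivial_elt[d nd] nab.
have [a1 | na] := eqVneq a 1.
  exists (c, 1); rewrite ?pairg1_eq1 // cycle_pairg1 in_setX inE.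
  by rewrite a1 pair1g_eq1 in nab; rewrite (negbTE nab) andbF.
by exists (1, d); rewrite ?pair1g_eq1 // cycle_pair1g in_setX inE (negbTE na).
Qed.

Section NoPgroupCentralizer.

Hypothesis cent1_not_pgroup : forall x : GH, prime #[x] -> ~~ #[x].-group 'C[x].

Lemma coprime_commuting_coordinate a b : prime #[(a, b)] ->
  (exists2 c, c != 1 & commute a c /\ coprime #[(a, b)] #[c]) \/
  (exists2 d, d != 1 & commute b d /\ coprime #[(a, b)] #[d]).
Proof.
move=> p_pr; set p := #[(a, b)] in p_pr *.
have [[c d] /cent1P/commute_pair[cca cdb] /andP[ncd p'cd]] :=
  not_pgroup_p'_elt (cent1_not_pgroup p_pr).
have p'_coprime t : p^'.-elt t -> coprime p #[t] := pnat_coprime (pnat_id p_pr).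
have [c1 | nc] := eqVneq c 1; [right; exists d | left; exists c] => //.
- by rewrite c1 pair1g_eq1 in ncd.
- split; first exact: commute_sym.
  exact/p'_coprime/(morph_p_elt (snd_morphism G H) (in_setT _) p'cd).
- split; first exact: commute_sym.
  exact/p'_coprime/(morph_p_elt (fst_morphism G H) (in_setT _) p'cd).
Qed.

Lemma connect_pairg1_or_pair1g (v : GH) : v != 1 ->
  (exists2 c, c != 1 & connect adj v (c, 1)) \/
  (exists2 d, d != 1 & connect adj v (1, d)).
Proof.
move=> nv; have [[a b] v_ab ab_pr] := cycle_prime_order_elt nv.
have nab : (a, b) != 1 by rewrite -order_gt1 prime_gt1.
have /connect_trans v_to := connect_in_cycle nv nab (cycle_id v) v_ab.
have [[c nc [cac co]] | [d nd [cbd co]]] := coprime_commuting_coordinate ab_pr.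
  by left; exists c => //; apply/v_to/connect_pairg1_coprime.
by right; exists d => //; apply/v_to/connect_pair1g_coprime.
Qed.

Lemma connect_pairg1_pair1g_prime g h :
  prime #[g] -> prime #[h] -> connect adj (g, 1) (1, h).
Proof.
move=> g_pr h_pr; have ng1 : (g, 1) != 1 :> GH.
  by rewrite -order_gt1 order_pairg1 prime_gt1.
have nh : h != 1 by rewrite -order_gt1 prime_gt1.
have c1x (x : H) : commute 1 x := commute_sym (commute1 x).
have [ogh | gh'] := eqVneq #[g] #[h]; last first.
  apply: connect_pair1g_coprime (c1x h) _ => //.
  by rewrite order_pairg1 prime_coprime // dvdn_prime2.
have gh_pr : prime #[(g, h)] by rewrite order_pair_eq.
have [[c nc [cgc co]] | [d nd [chd co]]] := coprime_commuting_coordinate gh_pr.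
  rewrite order_pair_eq // in co.
  apply: connect_trans (connect_pairg1_coprime ng1 nc cgc _) _.
    by rewrite order_pairg1.
  have nc1 : (c, 1) != 1 :> GH by rewrite pairg1_eq1.
  apply: connect_pair1g_coprime nc1 nh (c1x h) _.
  by rewrite order_pairg1 -ogh coprime_sym.
rewrite order_pair_eq // in co.
apply: connect_trans (connect_pair1g_coprime ng1 nd (c1x d) _) _.
  by rewrite order_pairg1.
have n1d : (1, d) != 1 :> GH by rewrite pair1g_eq1.
apply: connect_pair1g_coprime n1d nh (commute_sym chd) _.
by rewrite order_pair1g -ogh coprime_sym.
Qed.

Lemma connect_pairg1_pair1g c d : c != 1 -> d != 1 -> connect adj (c, 1) (1, d).
Proof.
move=> nc nd; have [g gc g_pr] := cycle_prime_order_elt nc.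
have [h hd h_pr] := cycle_prime_order_elt nd.
have [ng nh] : g != 1 /\ h != 1 by rewrite -!order_gt1 !prime_gt1.
apply: connect_trans (connect_trans (connect_pairg1_pair1g_prime g_pr h_pr) _).
  apply: (connect_in_cycle (w := (c, 1))); rewrite ?pairg1_eq1 ?cycle_id //.
  by rewrite cycle_pairg1 in_setX gc set11.
apply: (connect_in_cycle (w := (1, d))); rewrite ?pair1g_eq1 ?cycle_id //.
by rewrite cycle_pair1g in_setX hd set11.
Qed.

Lemma cyclic_graph_connected_prod :
  1 < #|G| -> 1 < #|H| -> cyclic_graph_connected GH.
Proof.
move=> /nontrivial_elt[c0 nc0] /nontrivial_elt[d0 nd0].
suff to_d0 v : v != 1 -> connect adj v (1, d0).
  move=> x y nx ny; apply: connect_trans (to_d0 x nx) _.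
  by rewrite connect_cyc_adj_sym to_d0.
case/connect_pairg1_or_pair1g=> [[c nc vc] | [d nd vd]].
  exact: connect_trans vc (connect_pairg1_pair1g nc nd0).
apply: connect_trans vd (connect_trans _ (connect_pairg1_pair1g nc0 nd0)).
by rewrite connect_cyc_adj_sym connect_pairg1_pair1g.
Qed.

End NoPgroupCentralizer.

End DirectProduct.

Theorem theorem4p4 (G H : finGroupType) :
  1 < #|G| -> 1 < #|H| ->
  (~ cyclic_graph_connected (G * H)%type <->
   exists p : nat, exists x : (G * H)%type,
     [/\ prime p, #[x] = p & p.-group 'C[x]]).
Proof.
move=> G_gt1 H_gt1; split=> [not_conn | [p [x [p_pr ox pC]]]]; last first.
  have nx : x != 1 by rewrite -order_gt1 ox prime_gt1.
  have [y ny x'y] := exists_not_mem_cycle G_gt1 H_gt1 nx.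
  exact: cent1_pgroup_not_connected nx ox pC ny x'y.
have [/existsP[x /andP[x_pr pC]] | /existsPn no_x] :=
  boolP [exists x : G * H, prime #[x] && #[x].-group 'C[x]].
  by exists #[x], x.
case: not_conn; apply: cyclic_graph_connected_prod => // x x_pr.
by have := no_x x; rewrite x_pr.
Qed.
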